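(* Let $q$ be a power of an odd prime $p$ and let $\ell$ be a linearized polynomial over $\mathbb F_{q^2}$. Suppose the function $x^{q+1}+\ell(x^2)$ is planar on $\mathbb F_{q^2}$. Then $\ell$ has at most $q$ roots in $\mathbb F_{q^2}$. Moreover, if $\ell(\mathbb F_{q^2})\cap\mathbb F_q=\{0\}$, then $\ell$ has exactly $q$ roots in $\mathbb F_{q^2}$.
   Context: A linearized polynomial over $\mathbb F_{q^2}$ is a polynomial of the form $\sum_i c_i x^{p^i}$ with $c_i\in\mathbb F_{q^2}$. A function $f$ on $\mathbb F_{q^n}$ is planar if for every $c\in\mathbb F_{q^n}^*$ the map $x\mapsto f(x+c)-f(x)$ is a permutation of $\mathbb F_{q^n}$. $\ell(\mathbb F_{q^2})$ denotes the image of the map induced by $\ell$ on $\mathbb F_{q^2}$. *)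

From mathcomp Require Import all_boot all_order all_algebra.
Set Implicit Arguments. Unset Strict Implicit. Unset Printing Implicit Defensive.
Import GRing.Theory.
Local Open Scope ring_scope.

Definition linearized (F : fieldType) (p : nat) (c : seq F) (x : F) : F :=
  \sum_(i < size c) c`_i * x ^+ (p ^ i).

Definition planar (F : finFieldType) (f : F -> F) : Prop :=
  forall c : F, c != 0 -> bijective (fun x => f (x + c) - f x).

From mathcomp Require Import all_boot all_order all_algebra.
From mathcomp Require Import finfield ring.
Set Implicit Arguments.
Unset Strict Implicit.
Unset Printing Implicit Defensive.
Import GRing.Theory.
Local Open Scope ring_scope.

(* Write L for the linearized polynomial, q = p^k, K = ker L and I = L(F).
   Since L is additive, the difference of f(x) = x^(q+1) + L(x^2) in the
   direction 1 is (x^q + x) + 2 L(x) + f(1), so planarity makes the trace-like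
   map x |-> x^q + x injective on K; it takes values in the q-element set
   {y | y^q = y}, whence |K| <= q.  If moreover L(F) meets F_q only in 0, then
   y |-> y^q - y is injective on I and maps I into {z | z^q = -z}, so
   |I| <= q, and q^2 = |F| <= |K| |I| forces |K| >= q. *)

Lemma pnat_pchar_expn (R : nzRingType) (p n : nat) :
  p \in [pchar R] -> [pchar R].-nat (p ^ n)%N.
Proof.
move=> pcharRp; rewrite (eq_pnat _ (pcharf_eq pcharRp)) pnatX pnat_id ?orTb //.
exact: pcharf_prime pcharRp.
Qed.

Lemma linearizedD (F : fieldType) (p : nat) (c : seq F) (x y : F) :
  p \in [pchar F] ->
  linearized p c (x + y) = linearized p c x + linearized p c y.
Proof.
move=> pcharFp; rewrite /linearized -big_split; apply: eq_bigr => i _.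
by rewrite exprDn_pchar ?mulrDr // pnat_pchar_expn.
Qed.

Lemma linearizedB (F : fieldType) (p : nat) (c : seq F) (x y : F) :
  p \in [pchar F] ->
  linearized p c (x - y) = linearized p c x - linearized p c y.
Proof.
move=> pcharFp.
by rewrite -[in RHS](subrK y x) (linearizedD c (x - y)) // addrK.
Qed.

Lemma leq_card_in_maps (T T' : finType) (f : T -> T') (A : {set T})
    (B : {set T'}) :
  {in A &, injective f} -> {in A, forall x, f x \in B} -> (#|A| <= #|B|)%N.
Proof.
move=> injf fAB; rewrite -(card_in_imset injf); apply/subset_leq_card/subsetP.
by move=> _ /imsetP[x Ax ->]; exact: fAB.
Qed.

Lemma card_roots_lt_size (F : finIdomainType) (P : {poly F}) :
  P != 0 -> (#|[set x : F | root P x]| < size P)%N.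
Proof.
move=> P_neq0; rewrite cardE max_poly_roots ?enum_uniq //.
by apply/allP => x; rewrite mem_enum inE.
Qed.

Lemma card_expr_eq_mul_le (F : finIdomainType) (n : nat) (a : F) :
  (1 < n)%N -> (#|[set y : F | y ^+ n == (a * y)%R]| <= n)%N.
Proof.
move=> n_gt1; pose P : {poly F} := 'X^n - a *: 'X.
have sizeP : size P = n.+1.
  rewrite size_polyDl ?size_polyXn // size_polyN.
  by apply: leq_ltn_trans (size_scale_leq _ _) _; rewrite size_polyX.
have := @card_roots_lt_size F P; rewrite -size_poly_eq0 sizeP ltnS => /(_ isT).
apply: leq_trans; apply/subset_leq_card/subsetP => y.
by rewrite !inE rootE /P !hornerE subr_eq0.
Qed.

Lemma card_ker_mul_image (G H : finZmodType) (g : G -> H) :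
  {morph g : x y / x - y} ->
  (#|G| <= #|[set x | g x == 0%R]| * #|[set g x | x in [set: G]]|)%N.
Proof.
move=> gB; pose s y := odflt 0 [pick z | g z == y].
have gs x : g (s (g x)) = g x.
  by rewrite /s; case: pickP => [z /eqP //|/(_ x)]; rewrite eqxx.
pose h x := (x - s (g x), g x).
have h_inj : injective h.
  by move=> x y [+ gxy]; rewrite gxy => /(canRL (subrK _)) ->; rewrite subrK.
rewrite -cardsX -cardsT -(card_imset _ h_inj); apply/subset_leq_card/subsetP.
move=> _ /imsetP[x _ ->]; rewrite !inE /= gB gs subrr eqxx /=.
by apply: imset_f; rewrite inE.
Qed.

Section PlanarLinearized.

Variables (F : finFieldType) (p k : nat) (c : seq F).
Hypotheses (pcharFp : p \in [pchar F]) (cardF : #|F| = ((p ^ k) ^ 2)%N).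

Local Notation q := (p ^ k)%N.
Local Notation L := (linearized p c).

Lemma q_gt1 : (1 < q)%N.
Proof.
by have := card_finNzRing_gt1 F; rewrite cardF; case: (p ^ k)%N => [|[]].
Qed.

Lemma exprqK : involutive (fun x : F => x ^+ q).
Proof. by move=> x; rewrite -exprM mulnn -cardF expf_card. Qed.

Lemma exprqD (x y : F) : (x + y) ^+ q = x ^+ q + y ^+ q.
Proof. by rewrite exprDn_pchar // pnat_pchar_expn. Qed.

Lemma exprqN (x : F) : (- x) ^+ q = - x ^+ q.
Proof. by rewrite exprNn_pchar // pnat_pchar_expn. Qed.

Lemma diff1E (x : F) :
  (x + 1) ^+ q.+1 + L ((x + 1) ^+ 2) - (x ^+ q.+1 + L (x ^+ 2))
    = (x ^+ q + x) + L x *+ 2 + (1 + L 1).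
Proof.
have -> : (x + 1) ^+ 2 = x ^+ 2 + (x + x) + 1 by ring.
rewrite exprSr exprqD expr1n !linearizedD // mulr2n (exprSr x q); ring.
Qed.

Lemma card_ker_linearized_le :
  planar (fun x : F => x ^+ q.+1 + L (x ^+ 2)) ->
  (#|[set x : F | L x == 0%R]| <= q)%N.
Proof.
move=> /(_ 1 (oner_neq0 F))[g /can_inj diff1_inj _].
apply: (leq_trans _ (card_expr_eq_mul_le 1 q_gt1)).
apply: (@leq_card_in_maps _ _ (fun x => x ^+ q + x)) => [x y|x _].
  rewrite !inE => /eqP Lx0 /eqP Ly0 exy; apply: diff1_inj.
  by rewrite /= !diff1E Lx0 Ly0 exy.
by rewrite inE mul1r exprqD exprqK addrC.
Qed.

Lemma card_image_linearized_le :
  (forall x : F, L x ^+ q = L x -> L x = 0) ->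
  (#|[set L x | x in [set: F]]| <= q)%N.
Proof.
move=> fixL0; apply: (leq_trans _ (card_expr_eq_mul_le (-1) q_gt1)).
apply: (@leq_card_in_maps _ _ (fun y => y ^+ q - y)) => [y1 y2|y].
  move=> /imsetP[x1 _ ->] /imsetP[x2 _ ->] e.
  apply/eqP; rewrite -subr_eq0 -linearizedB //; apply/eqP/fixL0.
  rewrite linearizedB // exprqD exprqN; apply/eqP; rewrite -subr_eq0.
  have -> : L x1 ^+ q - L x2 ^+ q - (L x1 - L x2)
              = (L x1 ^+ q - L x1) - (L x2 ^+ q - L x2) by ring.
  by rewrite e subrr.
by move=> /imsetP[x _ ->]; rewrite inE exprqD exprqN exprqK mulN1r opprB.
Qed.

End PlanarLinearized.

Theorem proposition2p3 (F : finFieldType) (p k : nat) (c : seq F) :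
  prime p -> odd p -> (0 < k)%N -> p \in [pchar F] ->
  #|F| = ((p ^ k) ^ 2)%N ->
  planar (fun x : F => x ^+ (p ^ k).+1 + linearized p c (x ^+ 2)) ->
  (#|[set x : F | linearized p c x == 0%R]| <= p ^ k)%N /\
  ((forall x : F, (linearized p c x) ^+ (p ^ k) = linearized p c x ->
                  linearized p c x = 0) ->
   #|[set x : F | linearized p c x == 0%R]| = (p ^ k)%N).
Proof.
(* Primality of p and 0 < k follow from the other hypotheses. *)
move=> _ _ _ pcharFp cardF planar_f.
have card_ker_le := card_ker_linearized_le pcharFp cardF planar_f.
split=> // fixL0; apply/eqP; rewrite eqn_leq card_ker_le /=.
have card_image_le := card_image_linearized_le pcharFp cardF fixL0.
have := card_ker_mul_image (fun x y => linearizedB c x y pcharFp).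
rewrite cardF -mulnn => /leq_trans/(_ (leq_mul (leqnn _) card_image_le)).
by rewrite leq_pmul2r // ltnW // (q_gt1 cardF).
Qed.
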